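(* The theory $T=\mathrm{Th}(\mathbb{U})$ has the independence property if and only if there are a tuple of variables $x$ and a finite set $\Delta$ of formulas of $\mathcal{L}(\mathbb{U})$ such that $\mathrm{opD}(\{x=x\},\Delta)=\omega$.
   Context: $T$ complete, monster model $\mathbb{U}$. $\phi^1=\phi$, $\phi^0=\neg\phi$. For $0<n<\omega$, a partial type $\pi(x)$ and finite set $\Delta$ of partitioned formulas $\phi(x,y)$ of $\mathcal{L}(\mathbb{U})$: $\mathrm{opR}_n(\pi,\Delta)\ge0$ if $\pi$ consistent; limits as usual; $\mathrm{opR}_n(\pi,\Delta)\ge\alpha+1$ iff there are instances $\phi_0(x,a_0),\dots,\phi_{n-1}(x,a_{n-1})$ from $\Delta$ with $\mathrm{opR}_n(\pi\cup\{\bigwedge_{i<n}\phi_i(x,a_i)^{\sigma(i)}\},\Delta)\ge\alpha$ for all $\sigma\in 2^n$; $\infty$ means $\ge$ all ordinals. The localized op-dimension is $\mathrm{opD}(\pi,\Delta)=\sup\{0<n<\omega:\mathrm{opR}_n(\pi,\Delta)=\infty\}\le\omega$. A formula $\phi(x,y)$ has the independence property if for every $N$ there is $B\subseteq\mathbb{U}^y$, $|B|=N$, such that all $2^N$ combinations $\{\phi(x,b)^{t_b}:b\in B\}$ are consistent; $T$ has the independence property if some formula does. *)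

From Stdlib Require Import Arith List Classical ClassicalEpsilon.
From Stdlib Require Fin.
Import ListNotations.
Set Implicit Arguments.

Record signature := {
  fsym : Type; rsym : Type;
  farity : fsym -> nat; rarity : rsym -> nat }.

Record structure (L : signature) := {
  dom :> Type;
  fint : forall f : fsym L, (Fin.t (farity L f) -> dom) -> dom;
  rint : forall r : rsym L, (Fin.t (rarity L r) -> dom) -> Prop }.

Section Syntax.
Variable L : signature.
Variable M : Type.  (* parameters: formulas of L(M) *)

Inductive term :=
| tvar (i : nat)
| tpar (m : M)
| tapp (f : fsym L) (args : Fin.t (farity L f) -> term).

Inductive form :=
| fTop
| fEq (t1 t2 : term)
| fRel (r : rsym L) (args : Fin.t (rarity L r) -> term)
| fNeg (phi : form)
| fAnd (phi psi : form)
| fEx (i : nat) (phi : form).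

Fixpoint tfree_in (B : nat -> Prop) (t : term) : Prop :=
  match t with
  | tvar i => B i
  | tpar _ => True
  | tapp f args => forall j, tfree_in B (args j)
  end.

Fixpoint ffree_in (B : nat -> Prop) (phi : form) : Prop :=
  match phi with
  | fTop => True
  | fEq t1 t2 => tfree_in B t1 /\ tfree_in B t2
  | fRel r args => forall j, tfree_in B (args j)
  | fNeg p => ffree_in B p
  | fAnd p q => ffree_in B p /\ ffree_in B q
  | fEx i p => ffree_in (fun j => j = i \/ B j) p
  end.

Fixpoint tparams_in (P : M -> Prop) (t : term) : Prop :=
  match t with
  | tvar _ => True
  | tpar m => P m
  | tapp f args => forall j, tparams_in P (args j)
  end.

Fixpoint fparams_in (P : M -> Prop) (phi : form) : Prop :=
  match phi with
  | fTop => True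
  | fEq t1 t2 => tparams_in P t1 /\ tparams_in P t2
  | fRel r args => forall j, tparams_in P (args j)
  | fNeg p => fparams_in P p
  | fAnd p q => fparams_in P p /\ fparams_in P q
  | fEx _ p => fparams_in P p
  end.

Definition fnopar (phi : form) : Prop := fparams_in (fun _ => False) phi.

Fixpoint tsubst (s : nat -> option M) (t : term) : term :=
  match t with
  | tvar i => match s i with Some m => tpar m | None => tvar i end
  | tpar m => tpar m
  | tapp f args => tapp f (fun j => tsubst s (args j))
  end.

Fixpoint fsubst (s : nat -> option M) (phi : form) : form :=
  match phi with
  | fTop => fTop
  | fEq t1 t2 => fEq (tsubst s t1) (tsubst s t2)
  | fRel r args => fRel r (fun j => tsubst s (args j))
  | fNeg p => fNeg (fsubst s p)
  | fAnd p q => fAnd (fsubst s p) (fsubst s q)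
  | fEx i p => fEx i (fsubst (fun j => if Nat.eqb j i then None else s j) p)
  end.

Fixpoint conj_list (l : list form) : form :=
  match l with [] => fTop | p :: l' => fAnd p (conj_list l') end.

Definition signed (b : bool) (phi : form) : form := if b then phi else fNeg phi.

End Syntax.

Arguments tvar {L M}.
Arguments tpar {L M}.
Arguments fTop {L M}.

Section Semantics.
Variable L : signature.
Variable M : structure L.

Definition upd (e : nat -> M) (i : nat) (m : M) : nat -> M :=
  fun j => if Nat.eqb j i then m else e j.

Fixpoint teval (e : nat -> M) (t : term L M) : M :=
  match t with
  | tvar i => e i
  | tpar m => m
  | tapp f args => fint M f (fun j => teval e (args j))
  end.

Fixpoint sat (e : nat -> M) (phi : form L M) : Prop :=
  match phi with
  | fTop => True
  | fEq t1 t2 => teval e t1 = teval e t2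
  | fRel r args => rint M r (fun j => teval e (args j))
  | fNeg p => ~ sat e p
  | fAnd p q => sat e p /\ sat e q
  | fEx i p => exists m : M, sat (upd e i m) p
  end.

(* A partial type pi(x), x = (v_0,...,v_{k-1}), is a set of formulas of
   L(M) with free variables among v_0..v_{k-1}. *)
Definition ptype := form L M -> Prop.

(* consistency = finite satisfiability in M (consistency with the
   elementary diagram of M) *)
Definition consistent (pi : ptype) : Prop :=
  forall l : list (form L M), (forall phi, In phi l -> pi phi) ->
    exists e : nat -> M, forall phi, In phi l -> sat e phi.

Definition add (pi : ptype) (psi : form L M) : ptype :=
  fun phi => pi phi \/ phi = psi.

Definition xeqx (k : nat) : ptype :=
  fun phi => phi = conj_list (map (fun i => fEq (tvar i) (tvar i)) (seq 0 k)).

Definition omega_saturated : Prop :=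
  forall (k : nat) (A : list M) (p : ptype),
    (forall phi, p phi -> ffree_in (fun j => j < k) phi /\
                          fparams_in (fun m => In m A) phi) ->
    consistent p -> exists e : nat -> M, forall phi, p phi -> sat e phi.

(* ---------- Partitioned formulas phi(x;y) ----------
   With x of length k and y of length pf_ylen, x = v_0..v_{k-1} and
   y = v_k..v_{k+ylen-1}. *)
Record pformula := { pf_ylen : nat; pf_form : form L M }.

Definition wf_pformula (k : nat) (phi : pformula) : Prop :=
  ffree_in (fun j => j < k + pf_ylen phi) (pf_form phi).

Definition inst (k : nat) (phi : form L M) (a : list M) : form L M :=
  fsubst (fun j => if Nat.leb k j then nth_error a (j - k) else None) phi.

(* ---------- op-rank ----------
   Ordinals are represented by elements of arbitrary well-founded
   relations; "opR_n(pi,Delta) >= w" is defined by well-founded recursion: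
   pi consistent, and for every v < w there are n instances from Delta all of
   whose 2^n sign-combinations added to pi have rank >= v. *)
Definition opR_step (W : Type) (lt : W -> W -> Prop) (n k : nat)
    (Delta : list pformula) (w : W)
    (rec : forall v, lt v w -> ptype -> Prop) (pi : ptype) : Prop :=
  consistent pi /\
  forall v (H : lt v w),
    exists (f : nat -> pformula) (a : nat -> list M),
      (forall i, i < n -> In (f i) Delta /\ length (a i) = pf_ylen (f i)) /\
      forall sigma : nat -> bool,
        rec v H (add pi (conj_list (map (fun i =>
            signed (sigma i) (inst k (pf_form (f i)) (a i))) (seq 0 n)))).

Definition opR_ge (W : Type) (lt : W -> W -> Prop) (Hwf : well_founded lt)
    (n k : nat) (Delta : list pformula) : W -> ptype -> Prop :=
  Fix Hwf (fun _ => ptype -> Prop) (fun w rec => opR_step lt n k Delta w rec).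

Definition opR_inf (n k : nat) (Delta : list pformula) (pi : ptype) : Prop :=
  forall (W : Type) (lt : W -> W -> Prop) (Hwf : well_founded lt) (w : W),
    opR_ge Hwf n k Delta w pi.

End Semantics.

Inductive natw := fin (n : nat) | omega.

Definition nat_bounded (S : nat -> Prop) : Prop := exists b, forall n, S n -> n <= b.
Definition nat_is_lub (S : nat -> Prop) (b : nat) : Prop :=
  (forall n, S n -> n <= b) /\ (forall c, (forall n, S n -> n <= c) -> b <= c).

(* supremum in omega+1 of a set of naturals (sup of the empty set is 0) *)
Definition sup_natw (S : nat -> Prop) : natw :=
  match excluded_middle_informative (nat_bounded S) with
  | left _ => fin (epsilon (inhabits 0) (nat_is_lub S))
  | right _ => omega
  end.

Definition opD (L : signature) (M : structure L) (k : nat)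
    (pi : ptype M) (Delta : list (pformula M)) : natw :=
  sup_natw (fun n => 0 < n /\ opR_inf n k Delta pi).

Definition formula_IP (L : signature) (M : structure L) (k l : nat)
    (phi : form L M) : Prop :=
  forall N : nat, exists B : list (list M),
    NoDup B /\ length B = N /\ (forall b, In b B -> length b = l) /\
    forall t : list M -> bool,
      consistent (fun psi => exists b, In b B /\
                    psi = signed (t b) (@inst L M k phi b)).

Definition has_IP (L : signature) (M : structure L) : Prop :=
  exists (k l : nat) (phi : form L M),
    ffree_in (fun j => j < k + l) phi /\ fnopar phi /\ formula_IP M k l phi.

(* (=>) Let phi(x; y) be a parameter-free formula with IP.  Using omega-saturation we
   build an infinite sequence b_0, b_1, ... that is independent for phi: a finite prefix
   extendable to independent families of every length is prolonged by a realization of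
   the finitely satisfiable type {theta_N(y) | N}, where theta_N(y) says "prefix, y
   extends to an independent family of length N more".  Every partial type implied by
   prescribing the truth values of phi(x; b_j), j < m, splits along b_m, ..., b_(m+n-1)
   into types of the same kind, so opR_n({x = x}, {phi}) = infinity for all n.

   (<=) If opD = omega, opR_n = infinity for arbitrarily large n; rank >= 1 already gives
   n instances from Delta with all sign combinations consistent, and by pigeonhole some
   psi in Delta has arbitrarily large independent families of instances.  Turning the
   parameters of psi into extra y-variables yields a parameter-free formula with IP. *)
From Stdlib Require Import Bool List Arith Lia Classical ClassicalEpsilon FunctionalExtensionality.
From Stdlib Require Fin.
Import ListNotations.
Set Implicit Arguments.

Section Semantics.
Variable L : signature.
Variable M : structure L.

Definition env_subst (s : nat -> option M) (e : nat -> M) : nat -> M :=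
  fun j => match s j with Some m => m | None => e j end.

Lemma env_subst_upd (s : nat -> option M) (e : nat -> M) i m :
  env_subst (fun j => if Nat.eqb j i then None else s j) (upd M e i m) =
  upd M (env_subst s e) i m.
Proof.
  apply functional_extensionality; intro j; unfold env_subst, upd.
  destruct (Nat.eqb j i); reflexivity.
Qed.

Lemma teval_subst (e : nat -> M) s (t : term L M) :
  teval M e (tsubst s t) = teval M (env_subst s e) t.
Proof.
  induction t as [i|m|f args IH]; simpl; auto.
  - unfold env_subst. destruct (s i); reflexivity.
  - f_equal. apply functional_extensionality. intro j. apply IH.
Qed.

Lemma sat_subst (p : form L M) : forall (e : nat -> M) s,
  sat M e (fsubst s p) <-> sat M (env_subst s e) p.
Proof.
  induction p as [| t1 t2 | r args | p IH | p IH1 q IH2 | i p IH]; intros e s; simpl.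
  - tauto.
  - rewrite !teval_subst. tauto.
  - replace (fun j => teval M e (tsubst s (args j)))
      with (fun j => teval M (env_subst s e) (args j)); [tauto|].
    apply functional_extensionality; intro j; rewrite teval_subst; auto.
  - rewrite IH. tauto.
  - rewrite IH1, IH2. tauto.
  - split; intros [m Hm]; exists m.
    + apply IH in Hm. rewrite env_subst_upd in Hm. exact Hm.
    + apply IH. rewrite env_subst_upd. exact Hm.
Qed.

Lemma teval_coincide (B : nat -> Prop) (t : term L M) (e e' : nat -> M) :
  tfree_in B t -> (forall j, B j -> e j = e' j) -> teval M e t = teval M e' t.
Proof.
  induction t as [i|m|f args IH]; simpl; intros Hf Hag; auto.
  f_equal. apply functional_extensionality. intro j. apply IH; auto.
Qed.

Lemma sat_coincide (p : form L M) : forall (B : nat -> Prop) (e e' : nat -> M),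
  ffree_in B p -> (forall j, B j -> e j = e' j) -> (sat M e p <-> sat M e' p).
Proof.
  induction p as [| t1 t2 | r args | p IH | p IH1 q IH2 | i p IH];
    intros B e e' Hf Hag; simpl in *.
  - tauto.
  - destruct Hf as [H1 H2].
    rewrite (teval_coincide _ _ e e' H1 Hag), (teval_coincide _ _ e e' H2 Hag). tauto.
  - replace (fun j => teval M e (args j)) with (fun j => teval M e' (args j)); [tauto|].
    apply functional_extensionality; intro j. symmetry. eapply teval_coincide; eauto.
  - rewrite (IH B e e'); tauto.
  - destruct Hf. rewrite (IH1 B e e'), (IH2 B e e'); tauto.
  - assert (Hupd : forall m j, j = i \/ B j -> upd M e i m j = upd M e' i m j).
    { intros m j Hj; unfold upd; destruct (Nat.eqb_spec j i); auto.
      destruct Hj; [congruence|auto]. }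
    split; intros [m Hm]; exists m;
      eapply (IH (fun j => j = i \/ B j) (upd M e i m) (upd M e' i m) Hf (Hupd m)); auto.
Qed.

Lemma tfree_mono (B B' : nat -> Prop) (t : term L M) :
  tfree_in B t -> (forall j, B j -> B' j) -> tfree_in B' t.
Proof. induction t; simpl; auto. Qed.

Lemma ffree_mono (p : form L M) : forall (B B' : nat -> Prop),
  ffree_in B p -> (forall j, B j -> B' j) -> ffree_in B' p.
Proof.
  induction p; intros B B' Hf Hm; simpl in *; try tauto.
  - destruct Hf; split; eapply tfree_mono; eauto.
  - intro j; eapply tfree_mono; eauto.
  - eauto.
  - destruct Hf; split; eauto.
  - eapply IHp; eauto. intros j [H|H]; auto.
Qed.

Lemma tparams_mono (P P' : M -> Prop) (t : term L M) :
  tparams_in P t -> (forall m, P m -> P' m) -> tparams_in P' t.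
Proof. induction t; simpl; auto. Qed.

Lemma fparams_mono (p : form L M) : forall (P P' : M -> Prop),
  fparams_in P p -> (forall m, P m -> P' m) -> fparams_in P' p.
Proof.
  induction p; intros P P' Hp Hm; simpl in *; try tauto.
  - destruct Hp; split; eapply tparams_mono; eauto.
  - intro j; eapply tparams_mono; eauto.
  - eauto.
  - destruct Hp; split; eauto.
  - eauto.
Qed.

Lemma sat_conj (e : nat -> M) (l : list (form L M)) :
  sat M e (conj_list l) <-> forall p, In p l -> sat M e p.
Proof.
  induction l as [|q l IH]; simpl.
  - split; [intros _ p []|auto].
  - rewrite IH. split.
    + intros [Hq Hl] p [<-|Hp]; auto.
    + intros H; split; auto.
Qed.

Lemma sat_signed (e : nat -> M) b (p : form L M) :
  sat M e (signed b p) <-> (sat M e p <-> b = true).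
Proof.
  destruct b; simpl; split.
  - tauto.
  - intro H; apply H; reflexivity.
  - intros Hn; split; [contradiction|discriminate].
  - intros H Hp; discriminate (proj1 H Hp).
Qed.

Lemma ffree_conj (B : nat -> Prop) (l : list (form L M)) :
  (forall p, In p l -> ffree_in B p) -> ffree_in B (conj_list l).
Proof. induction l; simpl; auto. Qed.

Lemma fparams_conj (P : M -> Prop) (l : list (form L M)) :
  (forall p, In p l -> fparams_in P p) -> fparams_in P (conj_list l).
Proof. induction l; simpl; auto. Qed.

Lemma ffree_signed B b (p : form L M) : ffree_in B p -> ffree_in B (signed b p).
Proof. destruct b; simpl; auto. Qed.

Lemma fparams_signed P b (p : form L M) : fparams_in P p -> fparams_in P (signed b p).
Proof. destruct b; simpl; auto. Qed.

Lemma opR_ge_unfold (W : Type) (lt : W -> W -> Prop) (Hwf : well_founded lt) n k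
    (Delta : list (pformula M)) w (pi : ptype M) :
  opR_ge Hwf n k Delta w pi <->
  opR_step lt n k Delta w (fun v _ => opR_ge Hwf n k Delta v) pi.
Proof.
  unfold opR_ge at 1. rewrite Fix_eq; [reflexivity|].
  intros v f g Hfg. replace f with g; [reflexivity|].
  apply functional_extensionality_dep; intro u.
  apply functional_extensionality_dep; intro H. symmetry; apply Hfg.
Qed.

End Semantics.

Ltac case_nat_tests := repeat match goal with
  | |- context [Nat.leb ?a ?b] => destruct (Nat.leb_spec a b)
  | |- context [Nat.ltb ?a ?b] => destruct (Nat.ltb_spec a b)
  | |- context [Nat.eqb ?a ?b] => destruct (Nat.eqb_spec a b)
  end; simpl.

Section Blocks.
Variable L : signature.
Variable M : structure L.

Definition overwrite (e : nat -> M) (base len : nat) (g : nat -> M) : nat -> M :=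
  fun j => if (base <=? j) && (j <? base + len) then g (j - base) else e j.

Fixpoint exists_block (base len : nat) (p : form L M) : form L M :=
  match len with
  | 0 => p
  | S n => fEx base (exists_block (S base) n p)
  end.

Lemma overwrite_nil (e g : nat -> M) base : overwrite e base 0 g = e.
Proof.
  apply functional_extensionality; intro j; unfold overwrite.
  case_nat_tests; auto; lia.
Qed.

Lemma overwrite_cons (e g : nat -> M) base len :
  overwrite e base (S len) g =
  overwrite (upd M e base (g 0)) (S base) len (fun i => g (S i)).
Proof.
  apply functional_extensionality; intro j; unfold overwrite, upd.
  case_nat_tests; auto; try lia.
  - f_equal; lia.
  - subst; f_equal; lia.
Qed.

Lemma sat_exists_block len : forall base (e : nat -> M) p,
  sat M e (exists_block base len p) <-> exists g, sat M (overwrite e base len g) p.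
Proof.
  induction len as [|len IH]; intros base e p; simpl.
  - split.
    + intro H. exists e. rewrite overwrite_nil. exact H.
    + intros [g Hg]. rewrite overwrite_nil in Hg. exact Hg.
  - split.
    + intros [m Hm]. apply IH in Hm. destruct Hm as [g Hg].
      exists (fun i => match i with 0 => m | S i' => g i' end).
      rewrite overwrite_cons. exact Hg.
    + intros [g Hg]. rewrite overwrite_cons in Hg. exists (g 0). apply IH. eauto.
Qed.

Lemma ffree_exists_block len : forall base (B : nat -> Prop) (p : form L M),
  ffree_in (fun q => base <= q < base + len \/ B q) p -> ffree_in B (exists_block base len p).
Proof.
  induction len as [|len IH]; intros base B p H; simpl.
  - eapply ffree_mono; [exact H|]. intros j [Hj|Hj]; auto; lia.
  - apply IH. eapply ffree_mono; [exact H|]. intros j [Hj|Hj]; auto.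
    destruct (Nat.eq_dec j base); auto. left; lia.
Qed.

Lemma fparams_exists_block len : forall base (P : M -> Prop) (p : form L M),
  fparams_in P p -> fparams_in P (exists_block base len p).
Proof. induction len; simpl; auto. Qed.

End Blocks.

Fixpoint sign_patterns (R : nat) : list (nat -> bool) :=
  match R with
  | 0 => [fun _ => true]
  | S R' => flat_map (fun p => [fun i => if i =? R' then true else p i;
                               fun i => if i =? R' then false else p i])
                     (sign_patterns R')
  end.

Lemma sign_patterns_cover R (t : nat -> bool) :
  exists p, In p (sign_patterns R) /\ forall i, i < R -> p i = t i.
Proof.
  induction R as [|R IH]; simpl.
  - exists (fun _ => true); split; auto. intros; lia.
  - destruct IH as [p [Hp Ht]].
    exists (fun i => if i =? R then t R else p i). split.
    + apply in_flat_map. exists p. split; auto. destruct (t R); simpl; auto.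
    + intros i Hi. destruct (Nat.eqb_spec i R); subst; auto. apply Ht; lia.
Qed.

Lemma fin_common_list (A : Type) n : forall (Q : Fin.t n -> list A -> Prop),
  (forall j P P', Q j P -> incl P P' -> Q j P') -> (forall j, exists P, Q j P) ->
  exists P, forall j, Q j P.
Proof.
  induction n as [|n IH]; intros Q Hmono H.
  - exists []. intro j. apply (Fin.case0 (fun j => Q j [])).
  - destruct (IH (fun j => Q (Fin.FS j))) as [P1 HP1].
    + intros j P P' HQ Hi. eapply Hmono; eauto.
    + intro j; apply H.
    + destruct (H Fin.F1) as [P0 HP0]. exists (P0 ++ P1). intro j.
      apply (Fin.caseS' j).
      * eapply Hmono; eauto. apply incl_appl, incl_refl.
      * intro p. eapply Hmono; eauto. apply incl_appr, incl_refl.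
Qed.

Section ParameterAbstraction.
Variable L : signature.
Variable M : structure L.

Lemma tparams_finite (t : term L M) : exists P, tparams_in (fun m => In m P) t.
Proof.
  induction t as [i|m|f args IH]; simpl.
  - exists []; auto.
  - exists [m]; left; auto.
  - apply fin_common_list; auto. intros j P P' HQ Hi. eapply tparams_mono; eauto.
Qed.

Lemma fparams_finite (p : form L M) : exists P, fparams_in (fun m => In m P) p.
Proof.
  induction p as [| t1 t2 | r args | p IH | p IH1 q IH2 | i p IH]; simpl; auto.
  - exists []; auto.
  - destruct (tparams_finite t1) as [P1 H1]. destruct (tparams_finite t2) as [P2 H2].
    exists (P1 ++ P2). split; eapply tparams_mono; eauto; intros; apply in_or_app; auto.
  - apply fin_common_list; [intros j P P' HQ Hi; eapply tparams_mono; eauto|].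
    intro j. apply tparams_finite.
  - destruct IH1 as [P1 H1]. destruct IH2 as [P2 H2].
    exists (P1 ++ P2). split; eapply fparams_mono; eauto; intros; apply in_or_app; auto.
Qed.

Fixpoint bound_vars_below (p : form L M) : nat :=
  match p with
  | fNeg q => bound_vars_below q
  | fAnd a b => max (bound_vars_below a) (bound_vars_below b)
  | fEx i q => max (S i) (bound_vars_below q)
  | _ => 0
  end.

Fixpoint index_of (m : M) (Q : list M) : nat :=
  match Q with
  | [] => 0
  | x :: Q' => if excluded_middle_informative (m = x) then 0 else S (index_of m Q')
  end.

Lemma index_of_spec m Q : In m Q ->
  nth_error Q (index_of m Q) = Some m /\ index_of m Q < length Q.
Proof.
  induction Q as [|x Q IH]; simpl; [intros []|].
  intros H. destruct (excluded_middle_informative (m = x)) as [->|Hne]; simpl.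
  - split; auto; lia.
  - destruct H as [->|H]; [congruence|]. destruct (IH H). split; auto; lia.
Qed.

Variable P : list M.
Variable base : nat.

Fixpoint abstract_term (t : term L M) : term L M :=
  match t with
  | tvar i => tvar i
  | tpar m => tvar (base + index_of m P)
  | tapp f args => tapp f (fun j => abstract_term (args j))
  end.

Fixpoint abstract_form (p : form L M) : form L M :=
  match p with
  | fTop => fTop
  | fEq a b => fEq (abstract_term a) (abstract_term b)
  | fRel r args => fRel r (fun j => abstract_term (args j))
  | fNeg q => fNeg (abstract_form q)
  | fAnd a b => fAnd (abstract_form a) (abstract_form b)
  | fEx i q => fEx i (abstract_form q)
  end.

Lemma teval_abstract (t : term L M) e : tparams_in (fun m => In m P) t ->
  (forall m, In m P -> e (base + index_of m P) = m) ->
  teval M e (abstract_term t) = teval M e t.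
Proof.
  induction t as [i|m|f args IH]; simpl; intros Hp He; auto.
  f_equal. apply functional_extensionality. intro j. apply IH; auto.
Qed.

Lemma sat_abstract (p : form L M) : forall e, fparams_in (fun m => In m P) p ->
  bound_vars_below p <= base -> (forall m, In m P -> e (base + index_of m P) = m) ->
  (sat M e (abstract_form p) <-> sat M e p).
Proof.
  induction p as [| t1 t2 | r args | p IH | p IH1 q IH2 | i p IH];
    intros e Hp Hb He; simpl in *.
  - tauto.
  - destruct Hp. rewrite !teval_abstract; auto. tauto.
  - replace (fun j => teval M e (abstract_term (args j))) with (fun j => teval M e (args j));
      [tauto|].
    apply functional_extensionality; intro j. rewrite teval_abstract; auto.
  - rewrite IH; auto. tauto.
  - destruct Hp. rewrite IH1, IH2; auto; try lia. tauto.
  - assert (Hib : i < base /\ bound_vars_below p <= base) by (destruct (bound_vars_below p); lia).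
    assert (Hupd : forall m m', In m' P -> upd M e i m (base + index_of m' P) = m').
    { intros m m' Hm'; unfold upd.
      destruct (Nat.eqb_spec (base + index_of m' P) i); try lia; auto. }
    split; intros [m Hm]; exists m;
      apply (IH (upd M e i m) Hp ltac:(lia) (Hupd m)); auto.
Qed.

Lemma tfree_abstract (t : term L M) (B B' : nat -> Prop) : tfree_in B t ->
  tparams_in (fun m => In m P) t -> (forall j, B j -> B' j) ->
  (forall m, In m P -> B' (base + index_of m P)) -> tfree_in B' (abstract_term t).
Proof. induction t as [i|m|f args IH]; simpl; intros; auto. Qed.

Lemma ffree_abstract (p : form L M) : forall (B B' : nat -> Prop), ffree_in B p ->
  fparams_in (fun m => In m P) p -> bound_vars_below p <= base ->
  (forall j, B j -> B' j) -> (forall m, In m P -> B' (base + index_of m P)) ->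
  ffree_in B' (abstract_form p).
Proof.
  induction p as [| t1 t2 | r args | p IH | p IH1 q IH2 | i p IH];
    intros B B' Hf Hp Hb H1 H2; simpl in *; auto.
  - destruct Hf, Hp; split; eapply tfree_abstract; eauto.
  - intro j; eapply tfree_abstract; eauto.
  - eauto.
  - destruct Hf, Hp; split; [eapply IH1|eapply IH2]; eauto; lia.
  - assert (Hib : bound_vars_below p <= base) by (destruct (bound_vars_below p); lia).
    apply (IH (fun j => j = i \/ B j)); [exact Hf|exact Hp|exact Hib| |].
    + intros j [Hj|Hj]; auto.
    + intros m Hm. right. auto.
Qed.

Lemma nopar_abstract (p : form L M) : fnopar (abstract_form p).
Proof.
  unfold fnopar.
  assert (Ht : forall t : term L M, tparams_in (fun _ => False) (abstract_term t)).
  { induction t; simpl; auto. }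
  induction p; simpl; auto.
Qed.

End ParameterAbstraction.

Lemma sat_inst_abstract (L : signature) (M : structure L) (pad : M) k l L'
    (phi : form L M) (P b : list M) (e : nat -> M) :
  ffree_in (fun j => j < k + l) phi -> fparams_in (fun m => In m P) phi ->
  l <= L' -> bound_vars_below M phi <= L' -> length b = l ->
  (sat M e (inst M k (abstract_form M P (k + L') phi) (b ++ repeat pad (L' - l) ++ P)) <->
   sat M e (inst M k phi b)).
Proof.
  intros Hfree HP HlL HbL Hb. unfold inst. rewrite !sat_subst.
  rewrite sat_abstract; auto; [|lia|].
  - eapply sat_coincide; [exact Hfree|]. intros j Hj; cbv beta in Hj. unfold env_subst.
    destruct (Nat.leb_spec k j); auto. rewrite nth_error_app1 by lia. auto.
  - intros m Hm. unfold env_subst. destruct (Nat.leb_spec k (k + L' + index_of M m P)); [|lia].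
    destruct (index_of_spec M m P Hm) as [E1 E2].
    rewrite nth_error_app2 by lia. rewrite nth_error_app2 by (rewrite repeat_length; lia).
    rewrite repeat_length. replace (k + L' + index_of M m P - k - length b - (L' - l))
      with (index_of M m P) by lia. rewrite E1; reflexivity.
Qed.

Section Forward.
Variable L : signature.
Variable M : structure L.
Variable d : M.
Variables k l : nat.
Variable phi : form L M.
Hypothesis phi_free : ffree_in (fun j => j < k + l) phi.
Hypothesis phi_nopar : fnopar phi.

Definition glue (x b : nat -> M) : nat -> M := fun j => if j <? k then x j else b (j - k).

Definition holds (x b : nat -> M) : Prop := sat M (glue x b) phi.

Lemma holds_ext x x' b b' : (forall j, j < k -> x j = x' j) ->
  (forall j, j < l -> b j = b' j) -> (holds x b <-> holds x' b').
Proof.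
  intros Hx Hb. unfold holds. eapply sat_coincide; [exact phi_free|].
  intros j Hj; cbv beta in Hj. unfold glue. case_nat_tests; auto. apply Hb; lia.
Qed.

Lemma sat_inst_holds (e : nat -> M) (bl : list M) : length bl = l ->
  (sat M e (inst M k phi bl) <-> holds e (fun j => nth j bl d)).
Proof.
  intro Hl. unfold inst, holds. rewrite sat_subst. eapply sat_coincide; [exact phi_free|].
  intros j Hj; cbv beta in Hj. unfold env_subst, glue. case_nat_tests; try lia; auto.
  rewrite nth_error_nth' with (d := d) by lia. auto.
Qed.

Definition independent (R : nat) (cs : nat -> nat -> M) : Prop :=
  forall t : nat -> bool, exists x, forall i, i < R -> (holds x (cs i) <-> t i = true).

Lemma independent_mono R R' cs : R <= R' -> independent R' cs -> independent R cs.
Proof. intros HR HI t. destruct (HI t) as [x Hx]. exists x. intros; apply Hx; lia. Qed.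

Lemma independent_ext R cs cs' : (forall i j, i < R -> j < l -> cs i j = cs' i j) ->
  independent R cs -> independent R cs'.
Proof.
  intros H HI t. destruct (HI t) as [x Hx]. exists x. intros i Hi.
  rewrite <- (Hx i Hi). apply holds_ext; auto. intros; symmetry; auto.
Qed.

Section RankOfIndependentSequence.
Variable b : nat -> nat -> M.
Hypothesis b_independent : forall m, independent m b.

Definition sign_implied (pi : ptype M) : Prop :=
  exists m (s : nat -> bool), forall psi, pi psi -> forall x : nat -> M,
    (forall j, j < m -> (holds x (b j) <-> s j = true)) -> sat M x psi.

Lemma sign_implied_consistent pi : sign_implied pi -> consistent pi.
Proof.
  intros [m [s Hs]] lst Hl. destruct (b_independent m s) as [x Hx].
  exists x. intros p Hp. exact (Hs p (Hl p Hp) x Hx).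
Qed.

Definition Dphi : list (pformula M) := [Build_pformula M l phi].

Lemma nth_map_seq (f : nat -> M) j : j < l -> nth j (map f (seq 0 l)) d = f j.
Proof.
  intro Hj. rewrite nth_indep with (d' := f 0) by (rewrite length_map, length_seq; lia).
  rewrite map_nth, seq_nth by lia. auto.
Qed.

(* Splitting a sign-implied type along the next [n] members of the sequence keeps it
   sign-implied, so by well-founded induction its rank is above every ordinal. *)
Lemma sign_implied_rank n (W : Type) (lt : W -> W -> Prop) (Hwf : well_founded lt) :
  forall w pi, sign_implied pi -> opR_ge Hwf n k Dphi w pi.
Proof.
  intro w. induction w as [w IH] using (well_founded_ind Hwf).
  intros pi Hpi. apply opR_ge_unfold. split; [apply sign_implied_consistent; auto|].
  intros v Hv. destruct Hpi as [m [s Hs]].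
  exists (fun _ => Build_pformula M l phi), (fun i => map (b (m + i)) (seq 0 l)).
  split.
  - intros i Hi. split; [left; auto|]. simpl. rewrite length_map, length_seq; auto.
  - intro sigma. apply IH; auto.
    exists (m + n), (fun j => if j <? m then s j else sigma (j - m)).
    intros psi [Hpsi | ->] x Hx.
    + apply (Hs psi Hpsi x). intros j Hj. rewrite Hx by lia. case_nat_tests; tauto || lia.
    + apply sat_conj. intros p Hp. apply in_map_iff in Hp. destruct Hp as [i [<- Hi]].
      apply in_seq in Hi. apply sat_signed. simpl.
      rewrite sat_inst_holds by (rewrite length_map, length_seq; auto).
      specialize (Hx (m + i) ltac:(lia)).
      replace (if m + i <? m then s (m + i) else sigma (m + i - m)) with (sigma i) in Hx
        by (case_nat_tests; try lia; f_equal; lia).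
      rewrite <- Hx. apply holds_ext; auto. intros j Hj. apply nth_map_seq; auto.
Qed.

Lemma xeqx_sign_implied : sign_implied (xeqx M k).
Proof.
  exists 0, (fun _ => true). intros psi Hpsi x _. unfold xeqx in Hpsi. subst.
  apply sat_conj. intros p Hp. apply in_map_iff in Hp. destruct Hp as [i [<- _]]. simpl. auto.
Qed.

Lemma opD_Dphi_omega : opD k (xeqx M k) Dphi = omega.
Proof.
  unfold opD, sup_natw.
  destruct (excluded_middle_informative _) as [[N HN]|]; auto.
  exfalso. assert (S N <= N); [|lia]. apply HN. split; [lia|].
  intros W lt Hwf w. apply sign_implied_rank, xeqx_sign_implied.
Qed.

End RankOfIndependentSequence.

Lemma holds_overwrite e g : sat M (overwrite M e k l g) phi <-> holds e g.
Proof.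
  unfold holds. eapply sat_coincide; [exact phi_free|].
  intros j Hj; cbv beta in Hj. unfold overwrite, glue. case_nat_tests; auto; lia.
Qed.

(* Given a prefix [c_0, ..., c_(r-1)] of parameter tuples, the formulas [theta N (y)]
   say that [c_0, ..., c_(r-1), y] extends to an independent family of length
   [r + 1 + N]; they use only the parameters of the prefix and the variables [y]. *)
Section ExtensionFormulas.
Variable r : nat.
Variable c : nat -> nat -> M.

(* The [j]-th coordinate of the [i]-th tuple of the family [c_0, .., c_(r-1), y, z_0, ..]:
   a parameter for [i < r], else a variable of the block [y = v_(k+l) .. v_(k+2l-1)]
   or of the block of [z]'s starting at [v_(k+2l)]. *)
Definition slot (i j : nat) : term L M :=
  if i <? r then tpar (c i j) else if i =? r then tvar (k + l + j)
  else tvar (k + l + l + (i - r - 1) * l + j).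

Lemma slot_local i j (e e' : nat -> M) : (forall q, k + l <= q -> e q = e' q) ->
  teval M e (slot i j) = teval M e' (slot i j).
Proof. intros H. unfold slot. case_nat_tests; auto; apply H; lia. Qed.

Lemma slot_overwrite_x i j e1 gx :
  teval M (overwrite M e1 0 k gx) (slot i j) = teval M e1 (slot i j).
Proof. apply slot_local. intros q Hq. unfold overwrite; case_nat_tests; auto; lia. Qed.

(* [phi(x; ts)] for terms [ts]: the [y]-variables of [phi] are bound and equated to [ts]. *)
Definition phi_at (ts : nat -> term L M) : form L M :=
  exists_block M k l (fAnd (conj_list (map (fun j => fEq (tvar (k + j)) (ts j)) (seq 0 l))) phi).

Lemma sat_phi_at i e :
  sat M e (phi_at (slot i)) <-> holds e (fun j => teval M e (slot i j)).
Proof.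
  assert (Hslot : forall g j, teval M (overwrite M e k l g) (slot i j) = teval M e (slot i j)).
  { intros g j. apply slot_local. intros q Hq; unfold overwrite; case_nat_tests; auto; lia. }
  unfold phi_at. rewrite sat_exists_block. simpl. split.
  - intros [g [Heq Hphi]]. rewrite sat_conj in Heq.
    assert (Hg : forall j, j < l -> g j = teval M e (slot i j)).
    { intros j Hj. rewrite <- (Hslot g j).
      specialize (Heq (fEq (tvar (k + j)) (slot i j))). simpl in Heq. rewrite <- Heq.
      + unfold overwrite; case_nat_tests; try lia. f_equal; lia.
      + apply in_map_iff; exists j; split; auto; apply in_seq; lia. }
    apply holds_overwrite in Hphi. revert Hphi. apply holds_ext; auto. intros j Hj; symmetry; auto.
  - intro H. exists (fun j => teval M e (slot i j)). split.
    + apply sat_conj. intros p Hp. apply in_map_iff in Hp. destruct Hp as [j [<- Hj]].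
      apply in_seq in Hj. simpl. rewrite Hslot.
      unfold overwrite; case_nat_tests; try lia. replace (k + j - k) with j by lia; reflexivity.
    + apply holds_overwrite. auto.
Qed.

Definition pattern_formula (N : nat) (p : nat -> bool) : form L M :=
  exists_block M 0 k
    (conj_list (map (fun i => signed (p i) (phi_at (slot i))) (seq 0 (r + 1 + N)))).

Lemma sat_pattern_formula N p e : sat M e (pattern_formula N p) <->
  exists x, forall i, i < r + 1 + N -> (holds x (fun j => teval M e (slot i j)) <-> p i = true).
Proof.
  unfold pattern_formula. rewrite sat_exists_block.
  assert (Hkey : forall gx i, sat M (overwrite M e 0 k gx) (phi_at (slot i)) <->
                              holds gx (fun j => teval M e (slot i j))).
  { intros gx i. rewrite sat_phi_at. apply holds_ext.
    - intros j Hj. unfold overwrite; case_nat_tests; try lia. f_equal; lia.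
    - intros j Hj. apply slot_overwrite_x. }
  split.
  - intros [gx Hgx]. exists gx. intros i Hi. rewrite sat_conj in Hgx.
    rewrite <- Hkey. apply sat_signed. apply Hgx.
    apply in_map_iff. exists i. split; auto. apply in_seq. lia.
  - intros [x Hx]. exists x. apply sat_conj. intros q Hq.
    apply in_map_iff in Hq. destruct Hq as [i [<- Hi]]. apply in_seq in Hi.
    apply sat_signed. rewrite Hkey. apply Hx. lia.
Qed.

Definition indep_formula (N : nat) : form L M :=
  conj_list (map (pattern_formula N) (sign_patterns (r + 1 + N))).

Lemma sat_indep_formula N e :
  sat M e (indep_formula N) <-> independent (r + 1 + N) (fun i j => teval M e (slot i j)).
Proof.
  unfold indep_formula. rewrite sat_conj. split.
  - intros H t. destruct (sign_patterns_cover (r + 1 + N) t) as [p [Hp Hpt]].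
    assert (Hc : sat M e (pattern_formula N p)) by (apply H; apply in_map; auto).
    apply sat_pattern_formula in Hc. destruct Hc as [x Hx]. exists x. intros i Hi.
    rewrite Hx by auto. rewrite Hpt by auto. tauto.
  - intros HI q Hq. apply in_map_iff in Hq. destruct Hq as [p [<- Hp]].
    apply sat_pattern_formula. apply HI.
Qed.

Definition theta (N : nat) : form L M := exists_block M (k + l + l) (N * l) (indep_formula N).

Definition family (y : nat -> M) (ds : nat -> nat -> M) (i : nat) : nat -> M :=
  if i <? r then c i else if i =? r then y else ds (i - r - 1).

Lemma sat_theta N e : sat M e (theta N) <->
  exists ds, independent (r + 1 + N) (family (fun j => e (k + l + j)) ds).
Proof.
  unfold theta. rewrite sat_exists_block. split.
  - intros [g Hg]. apply sat_indep_formula in Hg.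
    exists (fun i j => g (i * l + j)). revert Hg. apply independent_ext.
    intros i j Hi Hj. unfold slot, family. case_nat_tests; auto.
    + unfold overwrite; case_nat_tests; auto; lia.
    + unfold overwrite; case_nat_tests; try nia. f_equal. lia.
  - intros [ds Hds]. exists (fun q => ds (q / l) (q mod l)). apply sat_indep_formula.
    revert Hds. apply independent_ext.
    intros i j Hi Hj. unfold slot, family. case_nat_tests; auto.
    + unfold overwrite; case_nat_tests; auto; lia.
    + unfold overwrite; case_nat_tests; try nia.
      replace (k + l + l + (i - r - 1) * l + j - (k + l + l)) with (j + (i - r - 1) * l) by lia.
      rewrite Nat.div_add, Nat.div_small, Nat.Div0.mod_add, Nat.mod_small by lia.
      reflexivity.
Qed.

Definition prefix_params : list M := flat_map (fun i => map (c i) (seq 0 l)) (seq 0 r).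

Lemma ffree_theta N : ffree_in (fun q => q < k + l + l) (theta N).
Proof.
  unfold theta. apply ffree_exists_block. unfold indep_formula.
  apply ffree_mono with (B := fun q => q < k + l + l + N * l);
    [|intros q Hq; cbv beta in *; lia].
  apply ffree_conj. intros p Hp. apply in_map_iff in Hp. destruct Hp as [pp [<- _]].
  unfold pattern_formula. apply ffree_exists_block. apply ffree_conj. intros p Hp.
  apply in_map_iff in Hp. destruct Hp as [i [<- Hi]]. apply in_seq in Hi.
  apply ffree_signed. unfold phi_at. apply ffree_exists_block. simpl. split.
  - apply ffree_conj. intros p Hp. apply in_map_iff in Hp. destruct Hp as [j [<- Hj]].
    apply in_seq in Hj. simpl. split; [lia|].
    unfold slot. case_nat_tests; simpl; auto; nia.
  - eapply ffree_mono; [exact phi_free|]. intros q Hq; cbv beta in *; lia.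
Qed.

Lemma fparams_theta N : fparams_in (fun m => In m prefix_params) (theta N).
Proof.
  unfold theta. apply fparams_exists_block. unfold indep_formula. apply fparams_conj.
  intros p Hp. apply in_map_iff in Hp. destruct Hp as [pp [<- _]].
  unfold pattern_formula. apply fparams_exists_block. apply fparams_conj. intros p Hp.
  apply in_map_iff in Hp. destruct Hp as [i [<- Hi]]. apply in_seq in Hi.
  apply fparams_signed. unfold phi_at. apply fparams_exists_block. simpl. split.
  - apply fparams_conj. intros p Hp. apply in_map_iff in Hp. destruct Hp as [j [<- Hj]].
    apply in_seq in Hj. simpl. split; auto.
    unfold slot. case_nat_tests; simpl; auto.
    unfold prefix_params. apply in_flat_map. exists i. split; [apply in_seq; lia|].
    apply in_map. apply in_seq. lia.
  - eapply fparams_mono; [exact phi_nopar|]. intros _ [].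
Qed.

End ExtensionFormulas.

Definition prefix_then (r : nat) (c ds : nat -> nat -> M) (i : nat) : nat -> M :=
  if i <? r then c i else ds (i - r).

Definition extendable (r : nat) (c : nat -> nat -> M) : Prop :=
  forall N, exists ds, independent (r + N) (prefix_then r c ds).

Lemma list_bounded_index (A : Type) (lst : list A) (P : nat -> A) :
  (forall p, In p lst -> exists N, p = P N) ->
  exists Nb, forall p, In p lst -> exists N, N <= Nb /\ p = P N.
Proof.
  induction lst as [|a lst IH]; intro H.
  - exists 0. intros p [].
  - destruct IH as [Nb HNb]. { intros p Hp; apply H; right; auto. }
    destruct (H a (or_introl eq_refl)) as [Na Ha].
    exists (Nb + Na). intros p [<-|Hp].
    + exists Na; split; auto; lia.
    + destruct (HNb p Hp) as [N [HN ->]]. exists N; split; auto; lia.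
Qed.

(* The type [{theta N (y) | N}] is finitely satisfiable (by extendability)
   and uses finitely many parameters, so it is realized by some [y]. *)
Lemma extendable_step (Hsat : omega_saturated M) r c :
  extendable r c -> exists y, extendable (S r) (prefix_then r c (fun _ => y)).
Proof.
  intro Hext.
  destruct (Hsat (k + l + l) (prefix_params r c) (fun psi => exists N, psi = theta r c N))
    as [e He].
  - intros psi [N ->]. split; [apply ffree_theta | apply fparams_theta].
  - intros lst Hl. destruct (list_bounded_index lst (theta r c) Hl) as [Nb HNb].
    destruct (Hext (S Nb)) as [ds Hds].
    exists (fun q => if k + l <=? q then ds 0 (q - (k + l)) else d).
    intros p Hp. destruct (HNb p Hp) as [N [HN ->]].
    apply sat_theta. exists (fun i => ds (S i)).
    apply independent_mono with (R' := r + S Nb); [lia|].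
    revert Hds. apply independent_ext. intros i j Hi Hj.
    unfold prefix_then, family. cbv beta. case_nat_tests; auto; try lia.
    + subst. replace (r - r) with 0 by lia. replace (k + l + j - (k + l)) with j by lia. auto.
    + f_equal; lia.
  - exists (fun j => e (k + l + j)). intro N.
    destruct (proj1 (sat_theta r c N e) (He _ (ex_intro _ N eq_refl))) as [ds Hds].
    exists ds. replace (S r + N) with (r + 1 + N) by lia. revert Hds. apply independent_ext.
    intros i j Hi Hj. unfold prefix_then, family. case_nat_tests; auto; try lia. f_equal; lia.
Qed.

(* The independence property of [phi] says exactly that the empty prefix is extendable. *)
Lemma extendable_nil c : formula_IP M k l phi -> extendable 0 c.
Proof.
  intros HIP N. destruct (HIP N) as [B [HND [HlenB [Hlens Hcons]]]].
  exists (fun i j => nth j (nth i B []) d).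
  intro t.
  set (t' := fun bl : list M => if excluded_middle_informative
                 (exists i, i < N /\ nth i B [] = bl /\ t i = true) then true else false).
  destruct (Hcons t' (map (fun bl => signed (t' bl) (inst M k phi bl)) B)) as [e He].
  - intros p Hp. apply in_map_iff in Hp. destruct Hp as [bl [<- Hbl]]. exists bl; auto.
  - exists e. intros i Hi. simpl in Hi.
    assert (HiB : In (nth i B []) B) by (apply nth_In; lia).
    specialize (He _ (in_map (fun bl => signed (t' bl) (inst M k phi bl)) _ _ HiB)).
    apply sat_signed in He. rewrite sat_inst_holds in He by auto.
    unfold prefix_then. case_nat_tests; try lia. replace (i - 0) with i by lia.
    rewrite He. unfold t'. destruct (excluded_middle_informative _) as [[i' [Hi' [Heq Ht]]]|Hn].
    + split; auto. intros _. assert (i' = i) as <-; auto.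
      apply (proj1 (NoDup_nth B []) HND); auto; lia.
    + split; [discriminate|]. intro Ht. exfalso; apply Hn. exists i; auto.
Qed.

Definition prolong (r : nat) (c : nat -> nat -> M) : nat -> M :=
  epsilon (inhabits (fun _ : nat => d)) (fun y => extendable (S r) (prefix_then r c (fun _ => y))).

Fixpoint prefix (m : nat) : nat -> nat -> M :=
  match m with
  | 0 => fun _ _ => d
  | S m' => prefix_then m' (prefix m') (fun _ => prolong m' (prefix m'))
  end.

Lemma prefix_extendable (Hsat : omega_saturated M) (HIP : formula_IP M k l phi) m :
  extendable m (prefix m).
Proof.
  induction m as [|m IH].
  - apply extendable_nil; auto.
  - simpl. unfold prolong. apply epsilon_spec. apply extendable_step; auto.
Qed.

(* The limit of the prefixes: an infinite sequence each of whose prefixes is [prefix m]. *)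
Definition indep_seq (j : nat) : nat -> M := prefix (S j) j.

Lemma prefix_indep_seq m i : i < m -> prefix m i = indep_seq i.
Proof.
  induction m as [|m IH]; intros Hi; [lia|]. simpl. unfold prefix_then at 1. case_nat_tests.
  - apply IH; auto.
  - assert (i = m) by lia. subst. unfold indep_seq. simpl.
    unfold prefix_then. case_nat_tests; try lia. auto.
Qed.

Lemma independent_indep_seq (Hsat : omega_saturated M) (HIP : formula_IP M k l phi) m :
  independent m indep_seq.
Proof.
  destruct (prefix_extendable Hsat HIP m 0) as [ds H]. rewrite Nat.add_0_r in H.
  revert H. apply independent_ext. intros i j Hi Hj. unfold prefix_then. case_nat_tests; try lia.
  rewrite prefix_indep_seq; auto.
Qed.

Lemma opD_omega_of_IP (Hsat : omega_saturated M) : formula_IP M k l phi ->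
  exists (k0 : nat) (Delta : list (pformula M)),
    (forall p, In p Delta -> wf_pformula k0 p) /\ opD k0 (xeqx M k0) Delta = omega.
Proof.
  intro HIP. exists k, Dphi. split.
  - intros p [<-|[]]. exact phi_free.
  - apply opD_Dphi_omega with (b := indep_seq). intro m. apply independent_indep_seq; auto.
Qed.

End Forward.

Lemma NoDup_firstn (A : Type) n (l : list A) : NoDup l -> NoDup (firstn n l).
Proof. intro H. rewrite <- (firstn_skipn n l) in H. eapply NoDup_app_remove_r; eauto. Qed.

Lemma In_firstn (A : Type) n (l : list A) x : In x (firstn n l) -> In x l.
Proof. intro H. rewrite <- (firstn_skipn n l). apply in_or_app; auto. Qed.

Definition to_bool (P : Prop) : bool := if excluded_middle_informative P then true else false.

Lemma to_bool_true P : to_bool P = true <-> P.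
Proof. unfold to_bool; destruct (excluded_middle_informative P); split; auto; discriminate. Qed.

Lemma pigeonhole (X : Type) (g : nat -> X) N (Delta : list X) : forall (I : list nat),
  NoDup I -> (forall i, In i I -> In (g i) Delta) -> length Delta * N < length I ->
  exists psi J, In psi Delta /\ length J = N /\ NoDup J /\
    forall i, In i J -> In i I /\ g i = psi.
Proof.
  induction Delta as [|psi0 rest IH]; intros I HND Hin Hlen.
  - destruct I as [|i I]; simpl in Hlen; [lia|]. destruct (Hin i (or_introl eq_refl)).
  - set (I0 := filter (fun i => to_bool (g i = psi0)) I).
    set (I1 := filter (fun i => negb (to_bool (g i = psi0))) I).
    assert (HL : length I0 + length I1 = length I) by apply filter_length.
    destruct (le_lt_dec N (length I0)) as [HN|HN].
    + exists psi0, (firstn N I0). split; [left; auto|]. split.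
      { rewrite length_firstn. lia. }
      split. { apply NoDup_firstn, NoDup_filter; auto. }
      intros i Hi. apply In_firstn in Hi. apply filter_In in Hi. destruct Hi as [Hi Hg].
      rewrite to_bool_true in Hg. auto.
    + destruct (IH I1) as [psi [J [H1 [H2 [H3 H4]]]]].
      * apply NoDup_filter; auto.
      * intros i Hi. apply filter_In in Hi. destruct Hi as [Hi Hg].
        destruct (Hin i Hi) as [Heq|Hr]; auto.
        exfalso. rewrite negb_true_iff in Hg.
        assert (to_bool (g i = psi0) = true) by (apply to_bool_true; auto). congruence.
      * simpl in Hlen. lia.
      * exists psi, J. split; [right; auto|]. split; auto. split; auto.
        intros i Hi. destruct (H4 i Hi) as [Hi1 Hg]. apply filter_In in Hi1. tauto.
Qed.

Lemma pigeonhole_unbounded (X : Type) (Q : X -> nat -> Prop) (Delta : list X) :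
  (forall psi N N', N' <= N -> Q psi N -> Q psi N') ->
  (forall N, exists psi, In psi Delta /\ Q psi N) ->
  exists psi, In psi Delta /\ forall N, Q psi N.
Proof.
  intro Hmono. induction Delta as [|psi0 rest IH]; intro H.
  - destruct (H 0) as [psi [[] _]].
  - destruct (classic (forall N, Q psi0 N)) as [Hall|Hn].
    + exists psi0; split; [left|]; auto.
    + apply not_all_ex_not in Hn. destruct Hn as [N0 HN0].
      destruct IH as [psi [Hpsi HF]].
      * intro N. destruct (H (N + N0)) as [psi [[<-|Hpsi] HF]].
        -- exfalso. apply HN0. eapply Hmono; [|exact HF]. lia.
        -- exists psi. split; auto. eapply Hmono; [|exact HF]. lia.
      * exists psi. split; [right|]; auto.
Qed.

Section Backward.
Variable L : signature.
Variable M : structure L.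
Variable k : nat.

Definition inst_family (psi : pformula M) (N : nat) : Prop :=
  exists B : list (list M), NoDup B /\ length B = N /\
    (forall b, In b B -> length b = pf_ylen psi) /\
    forall t : list M -> bool, exists e : nat -> M,
      forall b, In b B -> sat M e (signed (t b) (inst M k (pf_form psi) b)).

Lemma inst_family_mono psi N N' : N' <= N -> inst_family psi N -> inst_family psi N'.
Proof.
  intros HN [B [H1 [H2 [H3 H4]]]]. exists (firstn N' B).
  split; [apply NoDup_firstn; auto|].
  split; [rewrite length_firstn; lia|]. split.
  - intros b Hb. apply H3. eapply In_firstn; eauto.
  - intro t. destruct (H4 t) as [e He]. exists e. intros b Hb. apply He. eapply In_firstn; eauto.
Qed.

Lemma opD_unbounded (Delta : list (pformula M)) :
  opD k (xeqx M k) Delta = omega ->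
  forall N, exists n, N < n /\ opR_inf n k Delta (xeqx M k).
Proof.
  unfold opD, sup_natw. destruct (excluded_middle_informative _) as [_|Hnb]; [discriminate|].
  intros _ N. apply NNPP. intro Hno. apply Hnb. exists N. intros n [Hn Hr].
  destruct (le_lt_dec n N); auto. exfalso. apply Hno. exists n. auto.
Qed.

(* Already [opR_n >= 1] provides [n] instances from [Delta] all of whose sign
   combinations are consistent. *)
Lemma opR_inf_instances n (Delta : list (pformula M)) pi : opR_inf n k Delta pi ->
  exists (f : nat -> pformula M) (a : nat -> list M),
    (forall i, i < n -> In (f i) Delta /\ length (a i) = pf_ylen (f i)) /\
    forall sigma : nat -> bool, exists e : nat -> M, forall i, i < n ->
      sat M e (signed (sigma i) (inst M k (pf_form (f i)) (a i))).
Proof.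
  intro H. specialize (H nat lt lt_wf 1). apply opR_ge_unfold in H.
  destruct H as [_ H]. destruct (H 0 Nat.lt_0_1) as [f [a [Hfa Hs]]].
  exists f, a. split; auto. intro sigma. specialize (Hs sigma).
  apply opR_ge_unfold in Hs. destruct Hs as [Hc _].
  destruct (Hc [conj_list (map (fun i => signed (sigma i) (inst M k (pf_form (f i)) (a i)))
                               (seq 0 n))]) as [e He].
  - intros p [<-|[]]. right; auto.
  - exists e. intros i Hi. specialize (He _ (or_introl eq_refl)). rewrite sat_conj in He.
    apply He. apply in_map_iff. exists i. split; auto. apply in_seq; lia.
Qed.

(* Instances of one formula [psi] at distinct indices [J] of such a system form an
   independent family; their parameters are distinct since opposite signs at two
   indices are jointly realized. *)
Lemma inst_family_of_instances n (f : nat -> pformula M) (a : nat -> list M) psi J :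
  (forall i, i < n -> length (a i) = pf_ylen (f i)) ->
  (forall sigma : nat -> bool, exists e : nat -> M, forall i, i < n ->
      sat M e (signed (sigma i) (inst M k (pf_form (f i)) (a i)))) ->
  NoDup J -> (forall i, In i J -> i < n /\ f i = psi) -> inst_family psi (length J).
Proof.
  intros Hlen Hs HJnd HJ. exists (map a J). split; [|split; [|split]].
  - apply NoDup_map_NoDup_ForallPairs; auto.
    intros x y Hx Hy Hxy. destruct (Nat.eq_dec x y) as [|Hne]; auto. exfalso.
    destruct (HJ x Hx) as [Hxn Hfx]. destruct (HJ y Hy) as [Hyn Hfy].
    destruct (Hs (fun i => Nat.eqb i x)) as [e He].
    pose proof (He x Hxn) as E1. pose proof (He y Hyn) as E2.
    rewrite Nat.eqb_refl in E1. simpl in E1.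
    destruct (Nat.eqb_spec y x); [congruence|]. simpl in E2.
    apply E2. rewrite Hfy, <- Hfx, <- Hxy. auto.
  - apply length_map.
  - intros b Hb. apply in_map_iff in Hb. destruct Hb as [i [<- Hi]].
    destruct (HJ i Hi) as [Hin Hfi]. rewrite <- Hfi. auto.
  - intro t. destruct (Hs (fun i => t (a i))) as [e He]. exists e.
    intros b Hb. apply in_map_iff in Hb. destruct Hb as [i [<- Hi]].
    destruct (HJ i Hi) as [Hin Hfi]. rewrite <- Hfi. auto.
Qed.

Lemma inst_family_of_opD (Delta : list (pformula M)) :
  opD k (xeqx M k) Delta = omega -> exists psi, In psi Delta /\ forall N, inst_family psi N.
Proof.
  intro HD. apply pigeonhole_unbounded; [apply inst_family_mono|]. intro N.
  destruct (opD_unbounded _ HD (length Delta * N)) as [n [Hn Hinf]].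
  destruct (opR_inf_instances Hinf) as [f [a [Hfa Hs]]].
  destruct (@pigeonhole _ f N Delta (seq 0 n)) as [psi [J [HpD [HJl [HJnd HJ]]]]].
  - apply seq_NoDup.
  - intros i Hi. apply in_seq in Hi. apply Hfa. lia.
  - rewrite length_seq. auto.
  - exists psi. split; auto. rewrite <- HJl.
    apply inst_family_of_instances with (n := n) (f := f) (a := a); auto.
    + intros i Hi. apply Hfa; auto.
    + intros i Hi. destruct (HJ i Hi) as [Hin Hfi]. apply in_seq in Hin. split; [lia|auto].
Qed.

End Backward.

(* A formula with parameters having arbitrarily large independent families yields a
   parameter-free formula with the independence property: its parameters become extra
   [y]-variables, filled by the parameters themselves. *)
Lemma IP_of_inst_families (L : signature) (M : structure L) (Hinh : inhabited M) k
    (psi : pformula M) :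
  ffree_in (fun j => j < k + pf_ylen psi) (pf_form psi) ->
  (forall N, inst_family k psi N) -> has_IP M.
Proof.
  intros Hfree HF. destruct Hinh as [pad].
  set (phi := pf_form psi) in *. set (l := pf_ylen psi) in *.
  destruct (fparams_finite M phi) as [P HP].
  set (L' := max l (bound_vars_below M phi)).
  set (tail := repeat pad (L' - l) ++ P).
  exists k, (L' + length P), (abstract_form M P (k + L') phi). split; [|split].
  - eapply ffree_abstract; eauto; [lia| |].
    + intros j Hj; cbv beta in *; lia.
    + intros m Hm. destruct (index_of_spec M m P Hm). cbv beta. lia.
  - apply nopar_abstract.
  - intro N. destruct (HF N) as [B [H1 [H2 [H3 H4]]]].
    exists (map (fun b => b ++ tail) B). split; [|split; [|split]].
    + apply NoDup_map_NoDup_ForallPairs; auto. intros x y _ _ H. eapply app_inv_tail; eauto.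
    + rewrite length_map; auto.
    + intros b' Hb'. apply in_map_iff in Hb'. destruct Hb' as [b [<- Hb]].
      unfold tail. rewrite !length_app, repeat_length, (H3 b Hb). fold l. lia.
    + intro t. destruct (H4 (fun b => t (b ++ tail))) as [e He].
      intros lst Hl. exists e. intros p Hp. destruct (Hl p Hp) as [b' [Hb' ->]].
      apply in_map_iff in Hb'. destruct Hb' as [b [<- Hb]].
      specialize (He b Hb). apply sat_signed in He. apply sat_signed.
      unfold tail. rewrite sat_inst_abstract; auto; lia.
Qed.

Unset Implicit Arguments.

Theorem proposition1p3 (L : signature) (M : structure L)
    (Hinh : inhabited M) (Hsat : omega_saturated M) :
  has_IP M <->
  exists (k : nat) (Delta : list (pformula M)),
    (forall phi, In phi Delta -> wf_pformula k phi) /\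
    opD k (xeqx M k) Delta = omega.
Proof.
  split.
  - intros [k [l [phi [Hfree [Hnopar HIP]]]]]. destruct Hinh as [d].
    exact (opD_omega_of_IP d Hfree Hnopar Hsat HIP).
  - intros [k [Delta [Hwf HD]]].
    destruct (inst_family_of_opD k Delta HD) as [psi [Hin Hfam]].
    exact (IP_of_inst_families Hinh (Hwf psi Hin) Hfam).
Qed.
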